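(* Let $T$ be a tree with at least $3$ vertices and $v\in V(T)$. Then \[ f_{T,v}(v)=2+\max_{\substack{S\subseteq T\\ v\in V(S)}}\Bigg(\min_{P\in\mathcal{P}_S(v)}\sum_{w\in V(P)}\big(\deg_S(w)-2\big)\Bigg), \] where $S$ ranges over the subtrees (connected subgraphs) of $T$ containing $v$.
   Context: For a tree $T$ rooted at $v$, the values $f_{T,v}(w)$, $w\in V(T)$, are defined recursively: if $w$ has no children (no descendants) in the rooted tree, $f_{T,v}(w)=0$; otherwise let $u_0,\dots,u_k$ be the children of $w$, let $T_i$ be the subtree consisting of $u_i$ and all its descendants, rooted at $u_i$, and order them so that $c_i:=f_{T_i,u_i}(u_i)$ satisfy $c_0\ge c_1\ge\cdots\ge c_k$; then $f_{T,v}(w)=\max_{0\le i\le k}(i+c_i)$. (Note $f_{T,v}(w)=f_{T_w,w}(w)$ where $T_w$ is the subtree of descendants of $w$.) For a subtree $S$ and $w\in V(S)$, $\deg_S(w)$ is the degree of $w$ in $S$. $\mathcal{P}_S(v)$ is the set of maximal paths in $S$ having $v$ as an endpoint (if $S$ is the single vertex $v$, this is the one-vertex path). *)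

From HB Require Import structures.
From mathcomp Require Import all_boot all_order all_algebra.
Set Implicit Arguments. Unset Strict Implicit. Unset Printing Implicit Defensive.
Import Order.TTheory GRing.Theory Num.Theory.

(* A cycle is a closed walk
   x0 x1 ... xk x0 through at least 3 pairwise distinct vertices. *)
Definition is_tree (V : finType) (e : rel V) : Prop :=
  symmetric e /\ irreflexive e /\
  (forall x y : V, connect e x y) /\
  (forall c : seq V, cycle e c -> uniq c -> size c < 3).

Definition avoid (V : finType) (e : rel V) (w : V) : rel V :=
  [rel x y | [&& e x y, x != w & y != w]].

(* Children of w in the tree e rooted at r: neighbours u of w such that every
   path from u to the root goes through w. *)
Definition children (V : finType) (e : rel V) (r w : V) : seq V :=
  [seq u <- enum V | e w u && ~~ connect (avoid e w) u r].

(* f computed with a recursion fuel n (the depth of the tree is < #|V|, so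
   fuel #|V| suffices). *)
Fixpoint f_fuel (V : finType) (e : rel V) (r : V) (n : nat) (w : V) : nat :=
  match n with
  | 0 => 0
  | n'.+1 =>
      let cs := sort geq [seq f_fuel e r n' u | u <- children e r w] in
      \max_(i < size cs) (i + nth 0 cs i)
  end.

Definition f_val (V : finType) (e : rel V) (r w : V) : nat :=
  f_fuel e r #|V| w.

(* A subgraph S = (A, F) with vertex set A and (symmetric) edge set F of
   ordered pairs; it is a subtree containing v when it is connected. *)
Definition subtree_at (V : finType) (e : rel V) (v : V)
    (A : {set V}) (F : {set V * V}) : Prop :=
  v \in A /\
  (forall x y, (x, y) \in F -> [&& e x y, x \in A & y \in A]) /\
  (forall x y, (x, y) \in F -> (y, x) \in F) /\
  (forall x y, x \in A -> y \in A -> connect (fun a b => (a, b) \in F) x y).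

Definition degS (V : finType) (F : {set V * V}) (w : V) : nat :=
  #|[set x | (w, x) \in F]|.

(* Paths of S starting at v (vertices distinct, consecutive ones adjacent in
   S), maximal among paths having v as endpoint, i.e. not extendable at the
   other end. For S = {v} this is the one-vertex path [:: v]. *)
Definition max_path_from (V : finType) (A : {set V}) (F : {set V * V})
    (v : V) (P : seq V) : Prop :=
  exists p : seq V,
    [/\ P = v :: p, v \in A, path (fun a b => (a, b) \in F) v p, uniq P &
        forall x, (last v p, x) \in F -> x \in P].

Definition path_cost (V : finType) (F : {set V * V}) (P : seq V) : int :=
  (\sum_(w <- P) ((degS F w)%:Z - 2))%R.

Definition is_min_cost (V : finType) (A : {set V}) (F : {set V * V})
    (v : V) (m : int) : Prop :=
  (exists P, max_path_from A F v P /\ path_cost F P = m) /\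
  (forall P, max_path_from A F v P -> (m <= path_cost F P)%R).

From mathcomp Require Import all_boot all_algebra zify.
Set Implicit Arguments. Unset Strict Implicit. Unset Printing Implicit Defensive.

(* Root T at v and write f for f_{T,v}.  Given a subtree S containing v,
   descend from v, choosing at each vertex w the S-child of least f-value.
   The S-children of w number at least deg_S(w) - 1 (deg_S(v) at the root)
   and all have f-value at least that of the chosen one, so the recursion for
   f bounds the cost of this maximal path by f(v) - 2.  Conversely, if the
   index i attains f(w) = i + c_i, keep at every vertex w its i + 1 children
   of largest f-value; every maximal path from v in this subtree descends,
   and the same recursion shows that it costs at least f(v) - 2. *)

Definition rank_max (s : seq nat) : nat := \max_(i < size s) (i + nth 0 s i).

Lemma sorted_geq_count_le (s : seq nat) i c :
  sorted geq s -> nth 0 s i < c -> count (leq c) s <= i.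
Proof.
elim: s i => [|a s IH] i //= s_sorted.
case: i => [|i] /= lt_c.
  have a_max := order_path_min (rev_trans leq_trans) s_sorted.
  rewrite (@eq_in_count _ _ pred0) ?count_pred0.
    by move: lt_c; rewrite ltnNge; case: (c <= a).
  move=> y /(allP a_max) /= le_ya; apply/negbTE; rewrite -ltnNge.
  exact: leq_ltn_trans le_ya lt_c.
have := IH i (path_sorted s_sorted) lt_c; case: (c <= a) => /=; lia.
Qed.

Lemma rank_max_sort_ge (s : seq nat) d c :
  0 < d -> d <= count (leq c) s -> d.-1 + c <= rank_max (sort geq s).
Proof.
move=> d_gt0 d_le; set t := sort geq s.
have t_sorted : sorted geq t := sort_sorted (fun m n => leq_total n m) s.
have count_t : count (leq c) t = count (leq c) s by rewrite count_sort.
have lt_d_size : d.-1 < size t.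
  have := count_size (leq c) t; rewrite count_t; lia.
have le_c_nth : c <= nth 0 t d.-1.
  rewrite leqNgt; apply/negP => /(sorted_geq_count_le t_sorted).
  rewrite count_t; lia.
have := @leq_bigmax _ (fun i : 'I_(size t) => i + nth 0 t i) (Ordinal lt_d_size).
rewrite /rank_max /=; lia.
Qed.

Lemma rank_max_attained (s : seq nat) :
  0 < size s -> exists2 i, i < size s & rank_max s = i + nth 0 s i.
Proof.
by move=> s_gt0; rewrite /rank_max (bigop.bigmax_eq_arg (Ordinal s_gt0)) //; eexists.
Qed.

Lemma connect_step_last (T : finType) (R : rel T) a x :
  connect R a x -> x != a -> exists2 y, connect R a y & R y x.
Proof.
case/connectP => p p_path ->; move: p_path; case/lastP: p => [|q l].
  by rewrite eqxx.
rewrite rcons_path last_rcons => /andP[q_path Rql] _.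
by exists (last a q) => //; apply/connectP; exists q.
Qed.

Section RootedTree.

Variables (V : finType) (e : rel V) (r : V).
Hypothesis e_sym : symmetric e.
Hypothesis e_irr : irreflexive e.
Hypothesis e_conn : forall x y : V, connect e x y.
Hypothesis e_acyc : forall c : seq V, cycle e c -> uniq c -> size c < 3.

Local Notation ch := (children e r).
Local Notation fv := (f_val e r).

Lemma mem_children w u : (u \in ch w) = e w u && ~~ connect (avoid e w) u r.
Proof. by rewrite mem_filter mem_enum andbT. Qed.

Lemma children_uniq w : uniq (ch w).
Proof. by rewrite filter_uniq // enum_uniq. Qed.

Lemma avoid_sym w : symmetric (avoid e w).
Proof. by move=> x y; rewrite /avoid /= e_sym [(x != w) && _]andbC. Qed.

Lemma avoid_sub w : subrel (avoid e w) e.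
Proof. by move=> x y /and3P[]. Qed.

Lemma connect_avoid_eq w x : connect (avoid e w) x w -> x = w.
Proof.
case/connectP => p; case/lastP: p => [//|q y].
by rewrite rcons_path last_rcons => /andP[_ /and3P[_ _ /eqP y_w]] /esym.
Qed.

Lemma path_avoid (R : rel V) u y p :
  subrel R e -> path R y p -> u \notin y :: p -> path (avoid e u) y p.
Proof.
move=> subR; elim: p y => [//|z p IH] y /= /andP[Ryz z_path].
rewrite !inE !negb_or => /and3P[u_y u_z u_p].
by rewrite /avoid /= subR // eq_sym u_y eq_sym u_z IH // inE negb_or u_z.
Qed.

Lemma path_avoid_notin w x p : path (avoid e w) x p -> w \notin p.
Proof.
elim: p x => [//|z p IH] x /= /andP[/and3P[_ _ z_w] z_path].
by rewrite inE negb_or eq_sym z_w (IH z).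
Qed.

Lemma child_edge w u : u \in ch w -> e w u.
Proof. by rewrite mem_children => /andP[]. Qed.

Lemma children_root x : e r x -> x \in ch r.
Proof.
move=> erx; rewrite mem_children erx; apply/negP => /connect_avoid_eq xr.
by move: erx; rewrite xr e_irr.
Qed.

Lemma root_notin_children w : r \notin ch w.
Proof. by rewrite mem_children connect0 andbF. Qed.

Lemma child_neq_root w u : u \in ch w -> (u == r) = false.
Proof. by apply: contraTF => /eqP->; rewrite root_notin_children. Qed.

(* Two distinct non-child neighbours of w would close a cycle through w. *)
Lemma nonchild_nbr_unique w x y :
  e w x -> e w y -> x \notin ch w -> y \notin ch w -> x = y.
Proof.
move=> ewx ewy; rewrite !mem_children ewx ewy /= !negbK => cx cy.
have cxy : connect (avoid e w) x y.
  by apply: connect_trans cx _; rewrite (sym_connect_sym (avoid_sym w)).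
case: (eqVneq x y) => // neq_xy; exfalso.
case/connectP: cxy => p p_path p_last.
case/shortenP: p_path p_last => q q_path q_uniq _ q_last.
have x_w : x != w by apply: contraTneq ewx => ->; rewrite e_irr.
have w_cycle : cycle e (w :: x :: q).
  rewrite /cycle rcons_cons /= ewx rcons_path.
  by rewrite (sub_path (@avoid_sub w) q_path) -q_last e_sym.
have w_uniq : uniq (w :: x :: q).
  by rewrite cons_uniq q_uniq andbT inE negb_or eq_sym x_w (path_avoid_notin q_path).
have := e_acyc w_cycle w_uniq.
case: q {q_path q_uniq w_cycle w_uniq} q_last => [|z q] //= q_last.
by rewrite -q_last eqxx in neq_xy.
Qed.

Lemma child_parent_connect w u : u \in ch w -> connect (avoid e u) w r.
Proof.
rewrite mem_children => /andP[ewu u_nc].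
case/connectP: (e_conn w r) => p p_path p_last.
case/shortenP: p_path p_last => q q_path q_uniq _ q_last.
have u_w : u != w by apply: contraTneq ewu => ->; rewrite e_irr.
case u_q: (u \in w :: q); last first.
  by apply/connectP; exists q => //; exact: path_avoid q_path (negbT u_q).
rewrite inE (negbTE u_w) /= in u_q.
case/splitPr: u_q q_path q_uniq q_last => q1 q2.
rewrite cat_path last_cat => /andP[_ /= /andP[_ q2_path]].
rewrite mem_cat negb_or => /andP[/andP[_ w_q2] _] q2_last.
case/negP: u_nc; apply/connectP; exists q2 => //.
exact: path_avoid q2_path w_q2.
Qed.

Lemma child_not_parent w u : u \in ch w -> w \notin ch u.
Proof. by move=> /child_parent_connect c; rewrite mem_children c andbF. Qed.

Lemma parent_unique y z x : x \in ch y -> x \in ch z -> y = z.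
Proof.
move=> x_y x_z; apply: (@nonchild_nbr_unique x).
- by rewrite e_sym child_edge.
- by rewrite e_sym child_edge.
- exact: child_not_parent.
- exact: child_not_parent.
Qed.

(* The vertex set of the subtree T_w hanging from w. *)
Definition desc w : {set V} := [set y | (y == w) || ~~ connect (avoid e w) y r].

Lemma card_desc_gt0 w : 0 < #|desc w|.
Proof. by apply/card_gt0P; exists w; rewrite inE eqxx. Qed.

Lemma card_desc_child w u : u \in ch w -> #|desc u| < #|desc w|.
Proof.
move=> u_w; apply: proper_card; apply/properP; split.
  apply/subsetP => y; rewrite !inE => /orP[/eqP->|y_nc].
    by move: u_w; rewrite mem_children => /andP[_ ->]; rewrite orbT.
  case: (eqVneq y w) => //= y_w.
  apply: contra y_nc => /connectP[p p_path p_last].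
  case u_p: (u \in y :: p).
    have c_yu := path_connect p_path u_p.
    rewrite (sym_connect_sym (avoid_sym w)) in c_yu.
    move: u_w; rewrite mem_children => /andP[_ /negP[]].
    by apply: connect_trans c_yu _; apply/connectP; exists p.
  apply/connectP; exists p => //.
  exact: path_avoid (@avoid_sub w) p_path (negbT u_p).
exists w; first by rewrite inE eqxx.
rewrite inE negb_or negbK child_parent_connect // andbT.
by apply: contraTneq (child_edge u_w) => ->; rewrite e_irr.
Qed.

Lemma child_path_uniq x p : path (fun a b => b \in ch a) x p -> uniq (x :: p).
Proof.
move=> p_path; apply: (@map_uniq _ _ (fun z => #|desc z|)).
apply: (sorted_uniq (rev_trans ltn_trans) (@ltnn)).
by rewrite /= path_map; apply: sub_path p_path => a b /card_desc_child.
Qed.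

Lemma f_fuel_eq n m w :
  #|desc w| <= n -> #|desc w| <= m -> f_fuel e r n w = f_fuel e r m w.
Proof.
elim: n m w => [|n IH] [|m] w le_n le_m; try by move: (card_desc_gt0 w); lia.
rewrite /=; have -> // :
  [seq f_fuel e r n u | u <- ch w] = [seq f_fuel e r m u | u <- ch w].
by apply/eq_in_map => u u_w; apply: IH; move: (card_desc_child u_w); lia.
Qed.

Definition child_values w : seq nat := sort geq [seq fv u | u <- ch w].

Lemma f_val_rec w : fv w = rank_max (child_values w).
Proof.
rewrite /f_val; have := max_card (desc w); have := card_desc_gt0 w.
case: #|V| => [|n] gt0 le_n /=; first by lia.
have -> // : [seq f_fuel e r n u | u <- ch w] = [seq fv u | u <- ch w].
apply/eq_in_map => u u_w; apply: f_fuel_eq (max_card _).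
by move: (card_desc_child u_w); lia.
Qed.

Lemma f_val_leaf w : ch w = [::] -> fv w = 0.
Proof. by move=> w_leaf; rewrite f_val_rec /child_values w_leaf /rank_max big_ord0. Qed.

Lemma card_nonchild_nbr w : #|[set x | e w x && (x \notin ch w)]| <= (w != r).
Proof.
case: (eqVneq w r) => [->|_] /=.
  rewrite leqn0 cards_eq0; apply/eqP/setP => x; rewrite !inE.
  by apply/negbTE; apply/negP => /andP[/children_root ->].
apply/card_le1P => x; rewrite inE => /andP[e_wx x_nch] y; rewrite !inE.
apply/idP/idP => [/andP[e_wy y_nch]|/eqP->]; last by rewrite e_wx x_nch.
by apply/eqP; apply: nonchild_nbr_unique e_wy e_wx y_nch x_nch.
Qed.

Definition children_in (F : {set V * V}) w : seq V := [seq u <- ch w | (w, u) \in F].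

Definition down_edge (F : {set V * V}) : rel V :=
  [rel a b | (b \in ch a) && ((a, b) \in F)].

Lemma degS_le_children_in (F : {set V * V}) w :
  (forall x y, (x, y) \in F -> e x y) ->
  degS F w <= size (children_in F w) + (w != r).
Proof.
move=> F_e; rewrite /degS.
have F_nbrs : [set x | (w, x) \in F] \subset
    [set x in children_in F w] :|: [set x | e w x && (x \notin ch w)].
  apply/subsetP => x; rewrite !inE mem_filter => wx_F; rewrite wx_F /=.
  by case: (x \in ch w); rewrite ?F_e.
apply: leq_trans (subset_leq_card F_nbrs) _.
apply: leq_trans (leq_card_setU _ _) (leq_add _ (card_nonchild_nbr w)).
by rewrite cardsE (card_uniqP _) // filter_uniq // children_uniq.
Qed.

Lemma greedy_descent (F : {set V * V}) x :
  (forall x y, (x, y) \in F -> e x y) ->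
  exists p, [/\ path (down_edge F) x p,
    forall u, u \in ch (last x p) -> (last x p, u) \notin F &
    (path_cost F (x :: p) <= (fv x)%:Z - 1 - (x == r)%:Z)%R].
Proof.
move=> F_e; have [n] := ubnP #|desc x|; elim: n x => // n IH x /ltnSE le_n.
have deg_x := degS_le_children_in x F_e.
case F_x: (children_in F x) => [|u0 us].
  exists [::]; split => //=.
    move=> u u_ch; apply/negP => xu_F.
    have : u \in children_in F x by rewrite mem_filter xu_F u_ch.
    by rewrite F_x.
  rewrite /path_cost big_seq1; rewrite F_x in deg_x.
  by case: (x == r) deg_x => /= deg_x; lia.
have u0_in : u0 \in children_in F x by rewrite F_x mem_head.
case: (@arg_minnP _ u0 (fun y => y \in children_in F x) fv u0_in) => u.
rewrite mem_filter => /andP[xu_F u_ch] u_min.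
have [p [p_path p_end p_cost]] := IH u (leq_trans (card_desc_child u_ch) le_n).
exists (u :: p); split => //=; first by rewrite p_path andbT /down_edge /= u_ch.
rewrite (child_neq_root u_ch) /= in p_cost.
have f_x : (size (children_in F x)).-1 + fv u <= fv x.
  rewrite [fv x]f_val_rec /child_values; apply: rank_max_sort_ge; first by rewrite F_x.
  have : all (preim fv (leq (fv u))) (children_in F x) by apply/allP => y /u_min.
  rewrite all_count => /eqP <-; rewrite count_map.
  exact: leq_count_subseq (filter_subseq _ _).
have size_gt0 : 0 < size (children_in F x) by rewrite F_x.
rewrite /path_cost big_cons -/(path_cost F (u :: p)).
by move: p_cost f_x size_gt0 deg_x; case: (x == r) => /=; lia.
Qed.

Lemma descent_max_path (A : {set V}) (F : {set V * V}) p :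
  r \in A -> (forall x y, (x, y) \in F -> e x y) ->
  path (down_edge F) r p ->
  (forall u, u \in ch (last r p) -> (last r p, u) \notin F) ->
  max_path_from A F r (r :: p).
Proof.
move=> r_A F_e p_path p_end; exists p; split => //.
- by apply: sub_path p_path => a b /andP[].
- by apply: child_path_uniq; apply: sub_path p_path => a b /andP[].
move=> y ly_F; have e_ly := F_e _ _ ly_F.
have [y_ch | y_nch] := boolP (y \in ch (last r p)).
  by move: (p_end y y_ch); rewrite ly_F.
move: p_path {p_end ly_F} e_ly y_nch; case/lastP: p => [|q l].
  by move=> _ /= /children_root ->.
rewrite rcons_path last_rcons => /andP[_ /andP[l_ch _]] e_ly y_nch.
have -> : y = last r q.
  apply: nonchild_nbr_unique e_ly _ y_nch (child_not_parent l_ch).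
  by rewrite e_sym child_edge.
by rewrite -rcons_cons mem_rcons inE mem_last orbT.
Qed.

Lemma exists_max_path_cost_le (A : {set V}) (F : {set V * V}) :
  subtree_at e r A F ->
  exists2 P, max_path_from A F r P & (path_cost F P <= (fv r)%:Z - 2)%R.
Proof.
case=> r_A [F_A _].
have F_e : forall x y, (x, y) \in F -> e x y by move=> x y /F_A /andP[].
have [p [p_path p_end p_cost]] := greedy_descent r F_e.
exists (r :: p); first exact: descent_max_path.
by move: p_cost; rewrite eqxx; lia.
Qed.

Definition opt_index w : nat :=
  find (fun i => fv w == i + nth 0 (child_values w) i) (iota 0 (size (child_values w))).

Definition opt_children w : seq V :=
  take (opt_index w).+1 (sort (relpre fv geq) (ch w)).

Definition opt_down : rel V := [rel a b | b \in opt_children a].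

Definition opt_vertices : {set V} := [set x | connect opt_down r x].

Definition opt_edges : {set V * V} :=
  [set p | ((p.1 \in opt_vertices) && opt_down p.1 p.2) ||
           ((p.2 \in opt_vertices) && opt_down p.2 p.1)].

Lemma child_values_sort w : child_values w = map fv (sort (relpre fv geq) (ch w)).
Proof. by rewrite /child_values sort_map. Qed.

Lemma size_child_values w : size (child_values w) = size (ch w).
Proof. by rewrite /child_values size_sort size_map. Qed.

Lemma opt_index_spec w : ch w != [::] ->
  opt_index w < size (ch w) /\
  fv w = opt_index w + nth 0 (child_values w) (opt_index w).
Proof.
move=> w_nleaf; rewrite -size_child_values.
have values_gt0 : 0 < size (child_values w).
  by rewrite size_child_values; case: (ch w) w_nleaf.
have [i i_lt f_w] := rank_max_attained values_gt0; rewrite -f_val_rec in f_w.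
have has_i : has (fun i => fv w == i + nth 0 (child_values w) i)
                 (iota 0 (size (child_values w))).
  by apply/hasP; exists i; rewrite ?mem_iota //= f_w.
have := nth_find 0 has_i; rewrite -/(opt_index w).
move: has_i; rewrite has_find size_iota => lt_index.
by rewrite nth_iota // add0n => /eqP.
Qed.

Lemma opt_children_sub w u : u \in opt_children w -> u \in ch w.
Proof. by move/mem_take; rewrite mem_sort. Qed.

Lemma opt_children_uniq w : uniq (opt_children w).
Proof. by rewrite take_uniq // sort_uniq children_uniq. Qed.

Lemma size_opt_children w : ch w != [::] -> size (opt_children w) = (opt_index w).+1.
Proof.
by case/opt_index_spec => lt_index _; rewrite size_takel // size_sort.
Qed.

Lemma opt_children_nil w : opt_children w = [::] -> ch w = [::].
Proof.
by move=> w_nil; apply: contraTeq isT => /size_opt_children; rewrite w_nil.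
Qed.

Lemma opt_children_ge w u :
  u \in opt_children w -> nth 0 (child_values w) (opt_index w) <= fv u.
Proof.
move=> u_w; have w_nleaf : ch w != [::] by case: (ch w) (opt_children_sub u_w).
have [lt_index _] := opt_index_spec w_nleaf.
case/(nthP u): (u_w) => j; rewrite size_opt_children // => j_lt <-.
rewrite /opt_children nth_take // -(nth_map u 0); last first.
  by rewrite size_sort (leq_trans j_lt lt_index).
rewrite -child_values_sort.
apply: (sorted_leq_nth (rev_trans leq_trans) (@leqnn)).
- exact: sort_sorted (fun m n => leq_total n m) _.
- by rewrite inE size_child_values (leq_trans j_lt lt_index).
- by rewrite inE size_child_values.
- by rewrite -ltnS.
Qed.

Lemma opt_vertices_root : r \in opt_vertices.
Proof. by rewrite inE connect0. Qed.

Lemma opt_vertices_down x u : x \in opt_vertices -> opt_down x u -> u \in opt_vertices.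
Proof. by rewrite !inE => r_x x_u; apply: connect_trans r_x (connect1 x_u). Qed.

Lemma opt_down_path x p : x \in opt_vertices ->
  path opt_down x p -> path (down_edge opt_edges) x p.
Proof.
elim: p x => [//|y p IH] x x_A /= /andP[x_y p_path].
rewrite /down_edge /= (opt_children_sub x_y) inE /= x_A x_y /=.
exact: IH (opt_vertices_down x_A x_y) p_path.
Qed.

Lemma opt_edges_sym : symmetric (fun a b => (a, b) \in opt_edges).
Proof. by move=> x y; rewrite !inE /= orbC. Qed.

Lemma subtree_opt : subtree_at e r opt_vertices opt_edges.
Proof.
split; first exact: opt_vertices_root.
split.
  move=> x y; rewrite inE /= => /orP[/andP[x_A x_y]|/andP[y_A y_x]].
    by rewrite child_edge ?(opt_children_sub x_y) // x_A (opt_vertices_down x_A x_y).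
  rewrite e_sym child_edge ?(opt_children_sub y_x) //.
  by rewrite y_A (opt_vertices_down y_A y_x).
split; first by move=> x y; rewrite opt_edges_sym.
have r_conn x : x \in opt_vertices -> connect (fun a b => (a, b) \in opt_edges) r x.
  rewrite inE => /connectP[p p_path ->]; apply/connectP; exists p => //.
  by apply: sub_path (opt_down_path opt_vertices_root p_path) => a b /andP[].
move=> x y x_A y_A; apply: connect_trans (r_conn y y_A).
by rewrite (sym_connect_sym opt_edges_sym) r_conn.
Qed.

Lemma degS_opt x : x \in opt_vertices ->
  degS opt_edges x = size (opt_children x) + (x != r).
Proof.
move=> x_A; rewrite /degS.
have -> : [set y | (x, y) \in opt_edges] =
    [set y in opt_children x] :|: [set y | (y \in opt_vertices) && opt_down y x].
  by apply/setP => y; move: x_A; rewrite !inE /= => ->.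
rewrite cardsU.
have -> : [set y in opt_children x] :&:
          [set y | (y \in opt_vertices) && opt_down y x] = set0.
  apply/setP => y; rewrite !inE; apply/negbTE/negP => /and3P[x_y _ y_x].
  by move: (child_not_parent (opt_children_sub x_y)); rewrite (opt_children_sub y_x).
rewrite cards0 subn0 cardsE (card_uniqP (opt_children_uniq x)); congr (_ + _).
case: (eqVneq x r) => [->|x_r] /=.
  apply/eqP; rewrite cards_eq0; apply/eqP/setP => y; rewrite !inE.
  apply/negbTE/negP => /andP[_ /opt_children_sub].
  by rewrite (negbTE (root_notin_children y)).
move: (x_A); rewrite inE => /connect_step_last /(_ x_r) [y r_y y_x].
rewrite -(cards1 y); apply: eq_card => z; rewrite !inE.
apply/idP/idP => [/andP[_ z_x]|/eqP->]; last by rewrite r_y y_x.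
by apply/eqP; apply: parent_unique (opt_children_sub z_x) (opt_children_sub y_x).
Qed.

Lemma opt_path_cost_ge x p : x \in opt_vertices -> path opt_down x p ->
  opt_children (last x p) = [::] ->
  ((fv x)%:Z - 1 - (x == r)%:Z <= path_cost opt_edges (x :: p))%R.
Proof.
elim: p x => [|u p IH] x x_A /=.
  move=> _ x_leaf; rewrite /path_cost big_seq1 degS_opt // x_leaf.
  by rewrite f_val_leaf ?opt_children_nil //; case: (x == r) => /=; lia.
move=> /andP[x_u p_path] p_end.
have := IH u (opt_vertices_down x_A x_u) p_path p_end.
rewrite (child_neq_root (opt_children_sub x_u)) /= => u_cost.
have x_nleaf : ch x != [::] by case: (ch x) (opt_children_sub x_u).
have [_ f_x] := opt_index_spec x_nleaf.
have := opt_children_ge x_u.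
rewrite /path_cost big_cons -/(path_cost opt_edges (u :: p)) degS_opt //.
rewrite size_opt_children //.
by move: u_cost f_x; case: (x == r) => /=; lia.
Qed.

Lemma opt_path_descends x p :
  path (fun a b => (a, b) \in opt_edges) x p -> uniq (x :: p) ->
  (forall z, opt_down z x -> z \notin p) -> path opt_down x p.
Proof.
elim: p x => [//|y p IH] x /= /andP[xy_F p_path] /andP[x_p y_uniq] x_par.
have x_y : opt_down x y.
  move: xy_F; rewrite inE /= => /orP[/andP[_ //]|/andP[_ y_x]].
  by move: (x_par y y_x); rewrite inE eqxx.
rewrite x_y IH // => z z_y.
rewrite (parent_unique (opt_children_sub z_y) (opt_children_sub x_y)).
by move: x_p; rewrite inE negb_or => /andP[].
Qed.

Lemma opt_max_path_descends P :
  max_path_from opt_vertices opt_edges r P ->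
  exists p, [/\ P = r :: p, path opt_down r p & opt_children (last r p) = [::]].
Proof.
case=> p [-> _ p_path p_uniq p_max]; exists p.
have p_down : path opt_down r p.
  apply: opt_path_descends p_path p_uniq _ => z /opt_children_sub.
  by rewrite (negbTE (root_notin_children z)).
split => //; case end_ch: (opt_children (last r p)) => [//|u us].
have u_end : opt_down (last r p) u by rewrite /opt_down /= end_ch mem_head.
have last_A : last r p \in opt_vertices.
  by rewrite inE (path_connect p_down (mem_last r p)).
have u_P : u \in r :: p by apply: p_max; move: last_A; rewrite !inE /= u_end => ->.
have sub_down : subrel opt_down (fun a b => b \in ch a) by move=> a b /opt_children_sub.
have : uniq (r :: rcons p u).
  by apply: child_path_uniq; rewrite rcons_path (sub_path sub_down p_down) sub_down.
by rewrite -rcons_cons rcons_uniq u_P.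
Qed.

Lemma opt_min_cost : is_min_cost opt_vertices opt_edges r ((fv r)%:Z - 2)%R.
Proof.
have cost_ge P : max_path_from opt_vertices opt_edges r P ->
    ((fv r)%:Z - 2 <= path_cost opt_edges P)%R.
  case/opt_max_path_descends => p [-> p_down p_end].
  by have := opt_path_cost_ge opt_vertices_root p_down p_end; rewrite eqxx; lia.
split=> //; have [P P_max P_cost] := exists_max_path_cost_le subtree_opt.
by exists P; split=> //; move: (cost_ge P P_max) P_cost; lia.
Qed.

End RootedTree.

Unset Implicit Arguments.

Theorem proposition4p2 (V : finType) (e : rel V) (v : V) :
  is_tree e -> 3 <= #|V| ->
  (exists (A : {set V}) (F : {set V * V}) (m : int),
      [/\ subtree_at e v A F, is_min_cost A F v m &
          Posz (f_val e v v) = (2 + m)%R]) /\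
  (forall (A : {set V}) (F : {set V * V}) (m : int),
      subtree_at e v A F -> is_min_cost A F v m ->
      (2 + m <= Posz (f_val e v v))%R).
Proof.
case=> [e_sym [e_irr [e_conn e_acyc]]] _; split.
  exists (opt_vertices e v), (opt_edges e v), ((f_val e v v)%:Z - 2)%R.
  split; [exact: subtree_opt | exact: opt_min_cost | lia].
move=> A F m A_F [_ m_min].
have [P P_max P_cost] := exists_max_path_cost_le e_sym e_irr e_conn e_acyc A_F.
by have := m_min P P_max; lia.
Qed.
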